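(* Consider the wound rotor synchronous machine model with state $x=(i_{s\alpha},i_{s\beta},i_f,\omega,\theta)^T$, input $\mathcal{V}=(v_{s\alpha},v_{s\beta},v_f)^T$, current vector $\mathcal{I}=(i_{s\alpha},i_{s\beta},i_f)^T$: $$\frac{d\mathcal{I}}{dt}=-\mathfrak{L}(\theta)^{-1}\mathfrak{R}_{eq}\mathcal{I}+\mathfrak{L}(\theta)^{-1}\mathcal{V},\qquad \dot\omega=0,\qquad\dot\theta=\omega,$$ where $$\mathfrak{L}(\theta)=\begin{bmatrix}L_0+L_2\cos2\theta & L_2\sin2\theta & M_f\cos\theta\\ L_2\sin2\theta & L_0-L_2\cos2\theta & M_f\sin\theta\\ M_f\cos\theta & M_f\sin\theta & L_f\end{bmatrix},\quad \mathfrak{R}=\mathrm{diag}(R_s,R_s,R_f),\quad \mathfrak{R}_{eq}=\mathfrak{R}+\omega\frac{\partial\mathfrak{L}}{\partial\theta}.$$ Let $L_d=L_0+L_2$, $L_q=L_0-L_2$, $L_\Delta=L_d-L_q$, assume $L_d,L_q,L_f>0$ and $\sigma_d:=1-\frac{M_f^2}{L_dL_f}\neq 0$, and set $\sigma_\Delta L_\Delta:=L_\Delta-\frac{M_f^2}{L_f}$ (i.e. $\sigma_\Delta=1-\frac{M_f^2}{L_\Delta L_f}$ when $L_\Delta\ne0$). Let $\mathcal{O}(x)$ be the $5\times5$ matrix whose rows are the gradients with respect to $x$ of $i_{s\alpha},\ i_{s\beta},\ i_f,\ \mathcal{L}_f i_{s\alpha},\ \mathcal{L}_f i_{s\beta}$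 (first Lie derivatives along the model, i.e. the right-hand sides of the $i_{s\alpha}$, $i_{s\beta}$ equations). Define $i_{sd},i_{sq}$ by $\begin{bmatrix}i_{s\alpha}\\ i_{s\beta}\end{bmatrix}=\begin{bmatrix}\cos\theta&-\sin\theta\\ \sin\theta&\cos\theta\end{bmatrix}\begin{bmatrix}i_{sd}\\ i_{sq}\end{bmatrix}$. Then $$\det\mathcal{O}(x)=\frac{1}{\sigma_dL_dL_q}\Big[(L_\Delta i_{sd}+M_fi_f)^2+\sigma_\Delta L_\Delta^2 i_{sq}^2\Big]\omega+\frac{\sigma_\Delta L_\Delta}{\sigma_dL_dL_q}\Big[\Big(L_\Delta\frac{di_{sd}}{dt}+M_f\frac{di_f}{dt}\Big)i_{sq}-(L_\Delta i_{sd}+M_fi_f)\frac{di_{sq}}{dt}\Big],$$ where $\frac{di_{sd}}{dt},\frac{di_{sq}}{dt},\frac{di_f}{dt}$ denote the time derivatives along the model (functions of the state and input). Equivalently, with $\Psi_{\mathcal{O}d}=L_\Delta i_{sd}+M_fi_f$, $\Psi_{\mathcal{O}q}=\sigma_\Delta L_\Delta i_{sq}$ and, when $(\Psi_{\mathcal{O}d},\Psi_{\mathcal{O}q})\ne 0$, $\theta_{\mathcal{O}}$ its polar angle, $$\det\mathcal{O}(x)=\frac{1}{\sigma_dL_dL_q}\Big[(\Psi_{\mathcal{O}d}^2+\sigma_\Delta L_\Delta^2 i_{sq}^2)\,\omega-(\Psi_{\mathcal{O}d}^2+\Psi_{\mathcal{O}q}^2)\frac{d\theta_{\mathcal{O}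}}{dt}\Big].$$
   Context: The Lie derivative $\mathcal{L}_f h$ of an output component $h$ along $\dot x=f(x,u)$ is $\frac{\partial h}{\partial x}f(x,u)$. The observability rank condition at $x$ means this matrix is nonsingular at $x$, which implies local weak observability. *)

From Stdlib Require Import Reals Lra List.
Import ListNotations.
Open Scope R_scope.

(* Matrices / vectors as index functions (0-based); dimensions given separately. *)
Definition vec := nat -> R.
Definition mat := nat -> nat -> R.

Definition rsum (n : nat) (f : nat -> R) : R :=
  fold_right Rplus 0 (map f (seq 0 n)).

Definition skip (k a : nat) : nat := if Nat.ltb a k then a else S a.

Definition minor (M : mat) (i j : nat) : mat :=
  fun r c => M (skip i r) (skip j c).

Fixpoint det (n : nat) (M : mat) : R :=
  match n with
  | O => 1
  | S n' => rsum n (fun j => (-1) ^ j * M 0%nat j * det n' (minor M 0 j))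
  end.

Definition inv (n : nat) (M : mat) : mat :=
  fun i j => (-1) ^ (i + j) * det (pred n) (minor M j i) / det n M.

Definition mv (n : nat) (M : mat) (v : vec) : vec :=
  fun i => rsum n (fun k => M i k * v k).

Definition Lmat (L0 L2 Mf Lf th : R) : mat := fun i j =>
  match i, j return R with
  | 0, 0 => L0 + L2 * cos (2 * th)
  | 0, 1 => L2 * sin (2 * th)
  | 0, 2 => Mf * cos th
  | 1, 0 => L2 * sin (2 * th)
  | 1, 1 => L0 - L2 * cos (2 * th)
  | 1, 2 => Mf * sin th
  | 2, 0 => Mf * cos th
  | 2, 1 => Mf * sin th
  | 2, 2 => Lf
  | _, _ => 0
  end.

Definition dLmat (L0 L2 Mf Lf th : R) : mat := fun i j =>
  match i, j return R with
  | 0, 0 => - 2 * L2 * sin (2 * th)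
  | 0, 1 => 2 * L2 * cos (2 * th)
  | 0, 2 => - Mf * sin th
  | 1, 0 => 2 * L2 * cos (2 * th)
  | 1, 1 => 2 * L2 * sin (2 * th)
  | 1, 2 => Mf * cos th
  | 2, 0 => - Mf * sin th
  | 2, 1 => Mf * cos th
  | _, _ => 0
  end.

Definition Rmat (Rs Rf : R) : mat := fun i j =>
  match i, j return R with
  | 0, 0 => Rs | 1, 1 => Rs | 2, 2 => Rf | _, _ => 0
  end.

Definition Req (L0 L2 Mf Lf Rs Rf om th : R) : mat :=
  fun i j => Rmat Rs Rf i j + om * dLmat L0 L2 Mf Lf th i j.

(* State x = (isa, isb, if, omega, theta) at indices 0..4; input u = (vsa, vsb, vf) at 0..2.
   Vector field of the model: dI/dt = L^-1 (V - Req I), domega/dt = 0, dtheta/dt = omega. *)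
Definition field (L0 L2 Mf Lf Rs Rf : R) (x u : vec) : vec := fun k =>
  match k with
  | 0 | 1 | 2 =>
      mv 3 (inv 3 (Lmat L0 L2 Mf Lf (x 4%nat)))
        (fun m => u m - mv 3 (Req L0 L2 Mf Lf Rs Rf (x 3%nat) (x 4%nat)) x m) k
  | 3 => 0
  | 4 => x 3%nat
  | _ => 0
  end.

Definition obs (L0 L2 Mf Lf Rs Rf : R) (u : vec) (i : nat) : vec -> R :=
  match i with
  | 0 => fun x => x 0%nat
  | 1 => fun x => x 1%nat
  | 2 => fun x => x 2%nat
  | 3 => fun x => field L0 L2 Mf Lf Rs Rf x u 0%nat
  | _ => fun x => field L0 L2 Mf Lf Rs Rf x u 1%nat
  end.

Definition upd (x : vec) (j : nat) (t : R) : vec :=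
  fun k => if Nat.eqb k j then t else x k.

Definition partial_deriv (h : vec -> R) (x : vec) (j : nat) (d : R) : Prop :=
  derivable_pt_lim (fun t => h (upd x j t)) (x j) d.

(* d-q currents and their time derivatives along the model (chain rule). *)
Definition isd (x : vec) : R := cos (x 4%nat) * x 0%nat + sin (x 4%nat) * x 1%nat.
Definition isq (x : vec) : R := - sin (x 4%nat) * x 0%nat + cos (x 4%nat) * x 1%nat.

Definition disd (L0 L2 Mf Lf Rs Rf : R) (x u : vec) : R :=
  let F := field L0 L2 Mf Lf Rs Rf x u in
  let th := x 4%nat in
  - sin th * F 4%nat * x 0%nat + cos th * F 0%nat
  + cos th * F 4%nat * x 1%nat + sin th * F 1%nat.

Definition disq (L0 L2 Mf Lf Rs Rf : R) (x u : vec) : R :=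
  let F := field L0 L2 Mf Lf Rs Rf x u in
  let th := x 4%nat in
  - cos th * F 4%nat * x 0%nat - sin th * F 0%nat
  - sin th * F 4%nat * x 1%nat + cos th * F 1%nat.

From Stdlib Require Import Reals Nsatz Lia Lra.
From Coquelicot Require Import Coquelicot.
Open Scope R_scope.

(* The first three observed functions are the currents themselves, so the
   first three rows of O are unit rows and det O reduces to the 2x2 Jacobian
   of the two Lie derivatives with respect to (omega, theta).  The inductance
   matrix has the theta-independent determinant Lq (Ld Lf - Mf^2), so its
   inverse is its adjugate divided by a constant and the current dynamics are
   explicit rational functions of cos theta and sin theta with a constant
   denominator.  Differentiating them and clearing denominators, the claim
   becomes a polynomial identity modulo cos^2 + sin^2 = 1. *)

Lemma det5_unit_rows (O : mat) :
  (forall i j, (i < 3)%nat -> (j < 5)%nat -> O i j = if Nat.eqb i j then 1 else 0) ->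
  det 5 O = O 3%nat 3%nat * O 4%nat 4%nat - O 3%nat 4%nat * O 4%nat 3%nat.
Proof.
  intro HO. unfold det, rsum, minor, skip; simpl.
  rewrite !(HO 0%nat), !(HO 1%nat), !(HO 2%nat) by lia; simpl. ring.
Qed.

Lemma partial_deriv_unique h x j d d' :
  partial_deriv h x j d -> partial_deriv h x j d' -> d = d'.
Proof. apply uniqueness_limite. Qed.

Lemma partial_deriv_coord (x : vec) i j :
  partial_deriv (fun y => y i) x j (if Nat.eqb i j then 1 else 0).
Proof.
  unfold partial_deriv, upd.
  destruct (Nat.eqb i j); [apply derivable_pt_lim_id | apply derivable_pt_lim_const].
Qed.

Section Model.
Variables L0 L2 Mf Lf Rs Rf : R.
Variable u : vec.

Definition Ldet : R := (L0 - L2) * ((L0 + L2) * Lf - Mf ^ 2).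

Lemma det_Lmat th : det 3 (Lmat L0 L2 Mf Lf th) = Ldet.
Proof.
  unfold det, rsum, minor, skip, Lmat, Ldet; simpl.
  rewrite cos_2a, sin_2a.
  assert (Hcs := sin2_cos2 th); unfold Rsqr in Hcs.
  nsatz.
Qed.

Lemma Ldet_sigma_d :
  0 < L0 + L2 -> 0 < Lf ->
  (1 - Mf ^ 2 / ((L0 + L2) * Lf)) * (L0 + L2) * (L0 - L2) * Lf = Ldet.
Proof. intros; unfold Ldet; field; lra. Qed.

Lemma Ldet_neq0 :
  0 < L0 + L2 -> 0 < L0 - L2 -> 0 < Lf -> 1 - Mf ^ 2 / ((L0 + L2) * Lf) <> 0 ->
  Ldet <> 0.
Proof.
  intros HLd HLq HLf Hsd. rewrite <- Ldet_sigma_d by assumption.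
  repeat apply Rmult_integral_contrapositive_currified; try exact Hsd; lra.
Qed.

Definition current_rate (k : nat) (x : vec) : R :=
  / Ldet * rsum 3 (fun m =>
    (-1) ^ (k + m) * det 2 (minor (Lmat L0 L2 Mf Lf (x 4%nat)) m k) *
    (u m - rsum 3 (fun n => Req L0 L2 Mf Lf Rs Rf (x 3%nat) (x 4%nat) m n * x n))).

Lemma field_current_rate x k : (k < 3)%nat ->
  field L0 L2 Mf Lf Rs Rf x u k = current_rate k x.
Proof.
  intro Hk.
  transitivity (mv 3 (inv 3 (Lmat L0 L2 Mf Lf (x 4%nat)))
      (fun m => u m - mv 3 (Req L0 L2 Mf Lf Rs Rf (x 3%nat) (x 4%nat)) x m) k).
  { destruct k as [|[|[|k]]]; try reflexivity; lia. }
  unfold mv, inv, current_rate. rewrite det_Lmat.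
  unfold rsum; simpl. unfold Rdiv. ring.
Qed.

Section Jacobian.
Variables (O : mat) (x : vec).
Hypothesis HO : forall i j, (i < 5)%nat -> (j < 5)%nat ->
  partial_deriv (obs L0 L2 Mf Lf Rs Rf u i) x j (O i j).

Lemma obs_current_rows i j :
  (i < 3)%nat -> (j < 5)%nat -> O i j = if Nat.eqb i j then 1 else 0.
Proof.
  intros Hi Hj.
  apply (partial_deriv_unique (fun y => y i) x j); [|apply partial_deriv_coord].
  specialize (HO i j ltac:(lia) Hj).
  destruct i as [|[|[|i]]]; [exact HO | exact HO | exact HO | lia].
Qed.

Lemma obs_rate_entry i j d :
  (3 <= i < 5)%nat -> (j < 5)%nat ->
  is_derive (fun t => current_rate (i - 3) (upd x j t)) (x j) d ->
  O i j = d.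
Proof.
  intros Hi Hj Hd.
  apply (partial_deriv_unique (obs L0 L2 Mf Lf Rs Rf u i) x j); [apply HO; lia|].
  apply is_derive_Reals.
  apply (is_derive_ext (fun t => current_rate (i - 3) (upd x j t))); [|exact Hd].
  intro t. rewrite <- field_current_rate by lia.
  destruct i as [|[|[|[|[|i]]]]]; try lia; reflexivity.
Qed.

End Jacobian.
End Model.

Arguments obs_current_rows {L0 L2 Mf Lf Rs Rf u O x}.
Arguments obs_rate_entry {L0 L2 Mf Lf Rs Rf u O x}.

Ltac current_rate_derivative :=
  cbv [current_rate rsum det minor skip Lmat Req Rmat dLmat upd
       fold_right map seq Nat.ltb Nat.leb Nat.eqb Nat.add Nat.sub pow];
  auto_derive; [exact I | reflexivity].

Theorem mainTheorem3 (L0 L2 Mf Lf Rs Rf : R) (x u : vec) (O : mat) :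
  let Ld := L0 + L2 in
  let Lq := L0 - L2 in
  let LD := Ld - Lq in
  let sd := 1 - Mf ^ 2 / (Ld * Lf) in
  let sDLD := LD - Mf ^ 2 / Lf in   (* sigma_Delta * L_Delta *)
  0 < Ld -> 0 < Lq -> 0 < Lf -> sd <> 0 ->
  (forall i j, (i < 5)%nat -> (j < 5)%nat ->
     partial_deriv (obs L0 L2 Mf Lf Rs Rf u i) x j (O i j)) ->
  det 5 O =
    / (sd * Ld * Lq) *
      ((LD * isd x + Mf * x 2%nat) ^ 2 + sDLD * LD * isq x ^ 2) * x 3%nat
  + sDLD / (sd * Ld * Lq) *
      ((LD * disd L0 L2 Mf Lf Rs Rf x u
          + Mf * field L0 L2 Mf Lf Rs Rf x u 2%nat) * isq x
       - (LD * isd x + Mf * x 2%nat) * disq L0 L2 Mf Lf Rs Rf x u).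
Proof.
  intros Ld Lq LD sd sDLD HLd HLq HLf Hsd HO.
  unfold Ld in HLd; unfold Lq in HLq.
  pose proof (Ldet_neq0 L0 L2 Mf Lf HLd HLq HLf Hsd) as HK.
  rewrite det5_unit_rows by exact (obs_current_rows HO).
  erewrite (obs_rate_entry HO 3 3), (obs_rate_entry HO 3 4),
    (obs_rate_entry HO 4 3), (obs_rate_entry HO 4 4)
    by (lia || current_rate_derivative).
  replace (sd * Ld * Lq) with (Ldet L0 L2 Mf Lf / Lf)
    by (rewrite <- Ldet_sigma_d by assumption; unfold sd, Ld, Lq; field; split; lra).
  unfold disd, disq, isd, isq; simpl (field _ _ _ _ _ _ x u 4%nat).
  rewrite !field_current_rate by lia.
  cbv [current_rate rsum det minor skip Lmat Req Rmat dLmat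
       fold_right map seq Nat.ltb Nat.leb Nat.add pow].
  rewrite cos_2a, sin_2a.
  assert (Hs2 : sin (x 4%nat) ^ 2 = 1 - cos (x 4%nat) ^ 2)
    by (rewrite <- (sin2_cos2 (x 4%nat)); unfold Rsqr; ring).
  unfold sDLD, LD, Ld, Lq, Ldet in *.
  field_simplify_eq; [|repeat split; try lra; intro E; apply HK; rewrite E; ring].
  ring [Hs2].
Qed.
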